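(* The Banach lattice $\ell_\infty$ does not have the unbounded Grothendieck property.
   Context: For a Banach lattice $E$ with dual $E'$, a sequence $(x_n')\subseteq E'$ is unbounded weak$^*$ convergent to $0$ (written $x_n'\xrightarrow{uaw^*}0$) if $|x_n'|\wedge u'\to 0$ in the weak$^*$ topology $\sigma(E',E)$ for every $u'\in E'_+$. $E$ has the unbounded Grothendieck property if every norm bounded sequence $(x_n')\subseteq E'$ with $x_n'\xrightarrow{uaw^*}0$ converges to $0$ weakly (in $\sigma(E',E'')$). *)

From Stdlib Require Import Reals.
From Coquelicot Require Import Coquelicot.
Open Scope R_scope.

Definition seqR := nat -> R.

Definition bdd (x : seqR) : Prop := exists M, forall n, Rabs (x n) <= M.

Definition normle (x : seqR) (M : R) : Prop := forall n, Rabs (x n) <= M.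

Definition sadd (x y : seqR) : seqR := fun n => x n + y n.
Definition ssub (x y : seqR) : seqR := fun n => x n - y n.
Definition sscal (a : R) (x : seqR) : seqR := fun n => a * x n.
Definition spos (x : seqR) : seqR := fun n => Rmax (x n) 0.
Definition sneg (x : seqR) : seqR := fun n => Rmax (- x n) 0.

(** * The dual E' = (l_infty)'  (functionals are only looked at on l_infty) *)
Definition functional := seqR -> R.

Definition dual_normle (f : functional) (C : R) : Prop :=
  forall x M, normle x M -> Rabs (f x) <= C * M.

Definition is_dual (f : functional) : Prop :=
  (forall x y, bdd x -> bdd y -> f (sadd x y) = f x + f y) /\
  (forall a x, bdd x -> f (sscal a x) = a * f x) /\
  (exists C, dual_normle f C).

Definition dual_pos (f : functional) : Prop :=
  is_dual f /\ (forall x, bdd x -> (forall n, 0 <= x n) -> 0 <= f x).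

(** Lattice operations of E' (Riesz–Kantorovich formulas): defined on the
    positive cone and extended by x = x^+ - x^-. *)
Definition abs_pos (f : functional) (x : seqR) : R :=
  real (Lub_Rbar (fun r => exists y, bdd y /\ (forall n, Rabs (y n) <= x n) /\ r = f y)).

Definition dabs (f : functional) : functional :=
  fun x => abs_pos f (spos x) - abs_pos f (sneg x).

Definition meet_pos (f g : functional) (x : seqR) : R :=
  real (Glb_Rbar (fun r => exists y, bdd y /\ (forall n, 0 <= y n <= x n) /\
                                     r = f y + g (ssub x y))).

Definition dmeet (f g : functional) : functional :=
  fun x => meet_pos f g (spos x) - meet_pos f g (sneg x).

Definition uawstar_null (f : nat -> functional) : Prop :=
  forall u, dual_pos u -> forall x, bdd x ->
    is_lim_seq (fun n => dmeet (dabs (f n)) u x) 0.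

Definition is_bidual (Phi : functional -> R) : Prop :=
  (forall f g, is_dual f -> is_dual g -> Phi (fun x => f x + g x) = Phi f + Phi g) /\
  (forall a f, is_dual f -> Phi (fun x => a * f x) = a * Phi f) /\
  (exists D, forall f C, is_dual f -> dual_normle f C -> Rabs (Phi f) <= D * C).

Definition weakly_null (f : nat -> functional) : Prop :=
  forall Phi, is_bidual Phi -> is_lim_seq (fun n => Phi (f n)) 0.

Definition linf_unbounded_grothendieck : Prop :=
  forall f : nat -> functional,
    (forall n, is_dual (f n)) ->
    (exists C, forall n, dual_normle (f n) C) ->
    uawstar_null f -> weakly_null f.

From Stdlib Require Import Reals.
From Coquelicot Require Import Coquelicot.
From Stdlib Require Import Lra Lia FunctionalExtensionality.

(* The coordinate functionals [x |-> x n] are a norm-one sequence in the dual of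
   l_infty, each its own modulus.  For a positive functional [u] and [0 <= z],
   cutting the n-th coordinate out of [z] shows
   [(coord n /\ u) z <= z n * u (unit_vec n)], and [u (unit_vec n) -> 0] because
   [sum_(k <= N) u (unit_vec k) = u (indicator of [0, N]) <= u 1].  Hence the
   sequence is uaw*-null, yet evaluation at the constant sequence 1, an element
   of the bidual, takes the value 1 on every term. *)

Definition coord (n : nat) : functional := fun x => x n.

Definition unit_vec (n : nat) : seqR := fun k => if Nat.eq_dec k n then 1 else 0.

Definition indicator_upto (N : nat) : seqR := fun k => if Nat.leb k N then 1 else 0.

Definition const_one : seqR := fun _ => 1.

Lemma Lub_Rbar_max (E : R -> Prop) (m : R) :
  E m -> is_ub_Rbar E m -> Lub_Rbar E = m.
Proof.
  intros Em ub. destruct (Lub_Rbar_correct E) as [ubL leastL].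
  apply Rbar_le_antisym; [now apply leastL | now apply ubL].
Qed.

Lemma Glb_Rbar_between (E : R -> Prop) (a b : R) :
  is_lb_Rbar E a -> E b -> a <= real (Glb_Rbar E) <= b.
Proof.
  intros lb Eb. destruct (Glb_Rbar_correct E) as [lbG greatestG].
  specialize (lbG b Eb). specialize (greatestG a lb).
  destruct (Glb_Rbar E); simpl in *; easy || lra.
Qed.

Lemma is_lim_seq_0_abs_le (a b : nat -> R) :
  (forall n, Rabs (a n) <= b n) -> is_lim_seq b 0 -> is_lim_seq a 0.
Proof.
  intros le_ab lim_b. apply is_lim_seq_abs_0.
  apply (is_lim_seq_le_le (fun _ => 0) _ b); [|apply is_lim_seq_const|exact lim_b].
  intros n. split; [apply Rabs_pos | apply le_ab].
Qed.

Lemma bdd_of_nonneg_le (x : seqR) (M : R) :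
  (forall k, 0 <= x k <= M) -> bdd x.
Proof.
  intros Hx. exists M. intros k. specialize (Hx k). rewrite Rabs_right; lra.
Qed.

Lemma bdd_ssub (x y : seqR) : bdd x -> bdd y -> bdd (ssub x y).
Proof.
  intros [Mx Hx] [My Hy]. exists (Mx + My). intros k. unfold ssub, Rminus.
  pose proof (Rabs_triang (x k) (- y k)). rewrite Rabs_Ropp in H.
  specialize (Hx k). specialize (Hy k). lra.
Qed.

Lemma spos_sneg_between (x : seqR) (M : R) (k : nat) :
  normle x M -> 0 <= spos x k <= M /\ 0 <= sneg x k <= M.
Proof.
  intros Hx. specialize (Hx k). apply Rabs_le_between in Hx.
  unfold spos, sneg. split; split; try apply Rmax_r; apply Rmax_lub; lra.
Qed.

Lemma unit_vec_between (n k : nat) : 0 <= unit_vec n k <= 1.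
Proof. unfold unit_vec. destruct (Nat.eq_dec k n); lra. Qed.

Lemma bdd_unit_vec (n : nat) : bdd (unit_vec n).
Proof. apply (bdd_of_nonneg_le _ 1), unit_vec_between. Qed.

Lemma bdd_indicator_upto (N : nat) : bdd (indicator_upto N).
Proof.
  apply (bdd_of_nonneg_le _ 1). intros k. unfold indicator_upto.
  destruct (Nat.leb k N); lra.
Qed.

Lemma bdd_const_one : bdd const_one.
Proof. apply (bdd_of_nonneg_le _ 1). intros k. unfold const_one. lra. Qed.

Lemma indicator_upto_0 : indicator_upto 0 = unit_vec 0.
Proof.
  apply functional_extensionality. intros [|k]; reflexivity.
Qed.

Lemma indicator_upto_S (N : nat) :
  indicator_upto (S N) = sadd (indicator_upto N) (unit_vec (S N)).
Proof.
  apply functional_extensionality. intros k. unfold sadd, indicator_upto, unit_vec.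
  destruct (Nat.eq_dec k (S N)), (Nat.leb_spec k N), (Nat.leb_spec k (S N));
    lra || lia.
Qed.

Lemma coord_dual_normle (n : nat) : dual_normle (coord n) 1.
Proof. intros x M Hx. unfold coord. specialize (Hx n). lra. Qed.

Lemma coord_is_dual (n : nat) : is_dual (coord n).
Proof.
  split; [|split]; [reflexivity | reflexivity |].
  exists 1. apply coord_dual_normle.
Qed.

Lemma abs_pos_coord (n : nat) (z : seqR) :
  (forall k, 0 <= z k) -> abs_pos (coord n) z = z n.
Proof.
  intros z_ge0. unfold abs_pos. rewrite (Lub_Rbar_max _ (z n)); [reflexivity| |].
  - exists (fun k => if Nat.eq_dec k n then z n else 0). split; [|split].
    + apply (bdd_of_nonneg_le _ (z n)). intros k.
      destruct (Nat.eq_dec k n); specialize (z_ge0 n); lra.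
    + intros k. destruct (Nat.eq_dec k n) as [->|_].
      * rewrite Rabs_right; [lra | apply Rle_ge, z_ge0].
      * rewrite Rabs_R0. apply z_ge0.
    + unfold coord. destruct (Nat.eq_dec n n); congruence.
  - intros r (y & _ & y_le & ->). simpl. unfold coord.
    specialize (y_le n). pose proof (Rle_abs (y n)). lra.
Qed.

Lemma dabs_coord (n : nat) : dabs (coord n) = coord n.
Proof.
  apply functional_extensionality. intros x. unfold dabs.
  rewrite !abs_pos_coord by (intros k; apply Rmax_r).
  unfold spos, sneg, coord, Rmax.
  destruct (Rle_dec (x n) 0), (Rle_dec (- x n) 0); lra.
Qed.

Section PositiveFunctional.

Variable u : functional.
Hypothesis u_pos : dual_pos u.

Lemma dual_pos_add (x y : seqR) : bdd x -> bdd y -> u (sadd x y) = u x + u y.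
Proof. apply u_pos. Qed.

Lemma dual_pos_ge0 (x : seqR) : bdd x -> (forall k, 0 <= x k) -> 0 <= u x.
Proof. apply u_pos. Qed.

Lemma dual_pos_le (x y : seqR) :
  bdd x -> bdd y -> (forall k, x k <= y k) -> u x <= u y.
Proof.
  intros bx by_ le_xy.
  assert (split_y : y = sadd x (ssub y x)).
  { apply functional_extensionality. intros k. unfold sadd, ssub. lra. }
  rewrite split_y, dual_pos_add by (auto using bdd_ssub).
  assert (0 <= u (ssub y x)).
  { apply dual_pos_ge0; [now apply bdd_ssub | intros k; unfold ssub; specialize (le_xy k); lra]. }
  lra.
Qed.

Lemma dual_pos_unit_vec_ge0 (n : nat) : 0 <= u (unit_vec n).
Proof. apply dual_pos_ge0; [apply bdd_unit_vec | apply unit_vec_between]. Qed.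

Lemma dual_pos_indicator_upto (N : nat) :
  u (indicator_upto N) = sum_n (fun k => u (unit_vec k)) N.
Proof.
  induction N as [|N IH].
  - now rewrite sum_O, indicator_upto_0.
  - rewrite sum_Sn, <- IH, indicator_upto_S.
    apply dual_pos_add; [apply bdd_indicator_upto | apply bdd_unit_vec].
Qed.

Lemma dual_pos_unit_vec_summable : ex_series (fun k => u (unit_vec k)).
Proof.
  destruct (ex_finite_lim_seq_incr (sum_n (fun k => u (unit_vec k))) (u const_one))
    as [l Hl].
  - intros N. rewrite sum_Sn. pose proof (dual_pos_unit_vec_ge0 (S N)).
    unfold plus. simpl. lra.
  - intros N. rewrite <- dual_pos_indicator_upto.
    apply dual_pos_le; [apply bdd_indicator_upto | apply bdd_const_one |].
    intros k. unfold indicator_upto, const_one. destruct (Nat.leb k N); lra.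
  - now exists l.
Qed.

Lemma dual_pos_unit_vec_lim : is_lim_seq (fun n => u (unit_vec n)) 0.
Proof. apply ex_series_lim_0, dual_pos_unit_vec_summable. Qed.

Lemma meet_pos_coord_between (n : nat) (z : seqR) (M : R) :
  (forall k, 0 <= z k <= M) ->
  0 <= meet_pos (coord n) u z <= z n * u (unit_vec n).
Proof.
  intros z_between. unfold meet_pos. apply Glb_Rbar_between.
  - intros r (y & _ & y_between & ->). simpl. unfold coord.
    assert (0 <= u (ssub z y)).
    { apply dual_pos_ge0.
      - apply (bdd_of_nonneg_le _ M). intros k. unfold ssub.
        specialize (y_between k). specialize (z_between k). lra.
      - intros k. unfold ssub. specialize (y_between k). lra. }
    specialize (y_between n). lra.
  - set (z_cut := fun k => if Nat.eq_dec k n then 0 else z k).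
    assert (z_cut_between : forall k, 0 <= z_cut k <= z k).
    { intros k. unfold z_cut. specialize (z_between k). destruct (Nat.eq_dec k n); lra. }
    assert (z_minus_cut : ssub z z_cut = sscal (z n) (unit_vec n)).
    { apply functional_extensionality. intros k. unfold ssub, sscal, z_cut, unit_vec.
      destruct (Nat.eq_dec k n) as [->|_]; lra. }
    exists z_cut. split; [|split]; [| exact z_cut_between |].
    + apply (bdd_of_nonneg_le _ M). intros k.
      specialize (z_cut_between k). specialize (z_between k). lra.
    + rewrite z_minus_cut. destruct u_pos as [[_ [u_scal _]] _].
      rewrite u_scal by apply bdd_unit_vec.
      unfold coord, z_cut. destruct (Nat.eq_dec n n); [lra | congruence].
Qed.

Lemma dmeet_coord_abs_le (n : nat) (x : seqR) (M : R) :
  normle x M -> Rabs (dmeet (coord n) u x) <= M * u (unit_vec n).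
Proof.
  intros Hx. unfold dmeet.
  assert (bounds := fun k => spos_sneg_between x M k Hx).
  pose proof (meet_pos_coord_between n (spos x) M (fun k => proj1 (bounds k))).
  pose proof (meet_pos_coord_between n (sneg x) M (fun k => proj2 (bounds k))).
  pose proof (dual_pos_unit_vec_ge0 n).
  destruct (bounds n) as [[_ spos_le] [_ sneg_le]].
  assert (spos x n * u (unit_vec n) <= M * u (unit_vec n)) by nra.
  assert (sneg x n * u (unit_vec n) <= M * u (unit_vec n)) by nra.
  apply Rabs_le. lra.
Qed.

End PositiveFunctional.

Lemma coord_uawstar_null : uawstar_null coord.
Proof.
  intros u u_pos x [M Hx].
  apply (is_lim_seq_0_abs_le _ (fun n => M * u (unit_vec n))).
  - intros n. rewrite dabs_coord. now apply dmeet_coord_abs_le.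
  - replace (Finite 0) with (Rbar_mult M 0) by (simpl; f_equal; ring).
    apply is_lim_seq_scal_l, dual_pos_unit_vec_lim, u_pos.
Qed.

Lemma eval_const_one_is_bidual : is_bidual (fun f => f const_one).
Proof.
  split; [|split]; [reflexivity | reflexivity |].
  exists 1. intros f C _ Hf. rewrite Rmult_1_l, <- (Rmult_1_r C).
  apply Hf. intros k. unfold const_one. rewrite Rabs_R1. lra.
Qed.

Lemma coord_not_weakly_null : ~ weakly_null coord.
Proof.
  intros Hw. specialize (Hw _ eval_const_one_is_bidual).
  apply is_lim_seq_unique in Hw. unfold coord, const_one in Hw.
  rewrite Lim_seq_const in Hw. injection Hw. lra.
Qed.

Theorem lemma2p3 : ~ linf_unbounded_grothendieck.
Proof.
  intros grothendieck. apply coord_not_weakly_null.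
  apply grothendieck.
  - apply coord_is_dual.
  - exists 1. apply coord_dual_normle.
  - apply coord_uawstar_null.
Qed.
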